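(* Let $(F,H)$ be the unique local solution, on its maximal interval of existence $[0,T_{\max})$, of the matrix Riccati system $$F'=\Gamma\otimes\big(\alpha+(c\otimes I_K)^\top H\big)\big(\alpha+(c\otimes I_K)^\top H\big)^\top-F(I_{N-1}\otimes\Lambda^{-1})F,\quad F(0)=0,$$ $$H'=\big(\Gamma\otimes(\alpha+(c\otimes I_K)^\top H)\big)\xi-F(I_{N-1}\otimes\Lambda^{-1})H,\quad H(0)=0.$$ Then $F(\tau)$ is positive semidefinite for every $\tau\in[0,T_{\max})$.
   Context: $N\ge2$, $K\le D$; $\gamma^1,\dots,\gamma^N>0$ with $\gamma^N=\max_n\gamma^n$; $\bar\gamma=(\sum_n1/\gamma^n)^{-1}$; $c=(c_1,\dots,c_{N-1})^\top$ with $c_n=\bar\gamma(1/\gamma^n-1/\gamma^N)$; $\Gamma:=\mathrm{diag}\{\gamma^1,\dots,\gamma^{N-1}\}-\tfrac1N\mathbb 1_{N-1}\mathbb 1_{N-1}^\top\mathrm{diag}\{\gamma^1-\gamma^N,\dots,\gamma^{N-1}-\gamma^N\}$; $\Lambda\in\mathbb R^{K\times K}$ symmetric positive definite; $\alpha\in\mathbb R^{K\times D}$; $\xi\in\mathbb R^{(N-1)D\times D}$; $F$ is $K(N-1)\times K(N-1)$ and $H$ is $K(N-1)\times D$; $\otimes$ is the Kronecker product. A real square matrix $C$ is positive semidefinite if $b^\top Cb\ge0$ for all $b$ (symmetry not required). *)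

From HB Require Import structures.
From mathcomp Require Import all_boot all_order all_algebra.
From mathcomp Require Import all_classical all_reals all_analysis.

Import Order.TTheory GRing.Theory Num.Theory.
Local Open Scope ring_scope.

Section Defs.
Variable R : realType.

(* entry of a matrix addressed by natural-number indices (0 outside range) *)
Definition mx_at m n (A : 'M[R]_(m, n)) (i j : nat) : R :=
  match @insub _ (fun x => x < m)%N _ i, @insub _ (fun x => x < n)%N _ j with
  | Some i', Some j' => A i' j'
  | _, _ => 0
  end.
Arguments mx_at {m n} A i j.

(* Kronecker product: (A (x) B)_{(i1*m2+i2),(j1*n2+j2)} = A_{i1 j1} B_{i2 j2} *)
Definition kron m1 n1 m2 n2 (A : 'M[R]_(m1, n1)) (B : 'M[R]_(m2, n2))
  : 'M[R]_(m1 * m2, n1 * n2) :=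
  \matrix_(p, q) (mx_at A (p %/ m2) (q %/ n2) * mx_at B (p %% m2) (q %% n2)).
Arguments kron {m1 n1 m2 n2} A B.

(* positive semidefinite (symmetry not required) *)
Definition psd m (C : 'M[R]_m) : Prop :=
  forall b : 'cV[R]_m, 0 <= (b^T *m C *m b) 0 0.

Definition spd m (C : 'M[R]_m) : Prop :=
  C^T = C /\ forall b : 'cV[R]_m, b != 0 -> 0 < (b^T *m C *m b) 0 0.

(* gamma is indexed by 1..N (gamma n = gamma^n) *)
Definition gammabar (N : nat) (gamma : nat -> R) : R :=
  (\sum_(1 <= i < N.+1) (gamma i)^-1)^-1.

Definition cvec (N : nat) (gamma : nat -> R) : 'cV[R]_(N.-1) :=
  \col_(i < N.-1) (gammabar N gamma * ((gamma i.+1)^-1 - (gamma N)^-1)).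

(* Gamma = diag(gamma^1..gamma^{N-1}) - (1/N) 1 1^T diag(gamma^1-gamma^N, ...) *)
Definition Gam (N : nat) (gamma : nat -> R) : 'M[R]_(N.-1) :=
  \matrix_(i < N.-1, j < N.-1)
    ((i == j)%:R * gamma i.+1 - N%:R^-1 * (gamma j.+1 - gamma N)).

(* alpha + (c (x) I_K)^T H   (a K x D matrix; 1*K cast to K) *)
Definition Mterm (N K D : nat) (gamma : nat -> R) (alpha : 'M[R]_(K, D))
  (H : 'M[R]_(N.-1 * K, D)) : 'M[R]_(K, D) :=
  alpha + castmx (mul1n K, erefl D) ((kron (cvec N gamma) (1%:M : 'M[R]_K))^T *m H).
Arguments Mterm N {K D} gamma alpha H.

Definition ricF (N K D : nat) (gamma : nat -> R) (Lam : 'M[R]_K)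
  (alpha : 'M[R]_(K, D)) (F : 'M[R]_(N.-1 * K)) (H : 'M[R]_(N.-1 * K, D))
  : 'M[R]_(N.-1 * K) :=
  let M := Mterm N gamma alpha H in
  kron (Gam N gamma) (M *m M^T)
  - F *m kron (1%:M : 'M[R]_(N.-1)) (invmx Lam) *m F.

Definition ricH (N K D : nat) (gamma : nat -> R) (Lam : 'M[R]_K)
  (alpha : 'M[R]_(K, D)) (xi : 'M[R]_(N.-1 * D, D))
  (F : 'M[R]_(N.-1 * K)) (H : 'M[R]_(N.-1 * K, D)) : 'M[R]_(N.-1 * K, D) :=
  let M := Mterm N gamma alpha H in
  kron (Gam N gamma) M *m xi
  - F *m kron (1%:M : 'M[R]_(N.-1)) (invmx Lam) *m H.

End Defs.

Arguments mx_at {R m n} A i j.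
Arguments kron {R m1 n1 m2 n2} A B.
Arguments psd {R m} C.
Arguments spd {R m} C.
Arguments gammabar {R} N gamma.
Arguments cvec {R} N gamma.
Arguments Gam {R} N gamma.
Arguments Mterm {R} N {K D} gamma alpha H.
Arguments ricF {R} N {K D} gamma Lam alpha F H.
Arguments ricH {R} N {K D} gamma Lam alpha xi F H.

(* Gamma is positive semidefinite: with s = sum_i z_i, u = sum_i g_i z_i and
   X = sum_i g_i z_i^2 (g_i = gamma^i), one has N z^T Gamma z = N X - s u + gamma^N s^2,
   and the sum of squares sum_i g_i ((N-1) z_i - 2 s)^2 >= 0 controls s u because
   sum_i g_i <= (N-1) gamma^N.  Hence Q = Gamma (x) M M^T and A = I (x) Lambda^-1 are
   positive semidefinite, A is symmetric, and F solves F' = Q - F A F with F(0) = 0.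

   Such an F stays positive semidefinite.  If v^T F(tau) v < 0 for a unit v, minimise
   e^(-L t) w^T F(t) w over (t, w) in [0, tau] x sphere, say at (t0, w0).  The minimum
   is negative, so t0 > 0 because F(0) = 0, and w0 minimises w^T F(t0) w on the sphere;
   hence w0 is an eigenvector of F + F^T for the eigenvalue 2k, k = w0^T F(t0) w0 < 0,
   which yields w0^T F A F w0 <= k^2 w0^T A w0.  The derivative of the weighted form at
   t0 is then at least e^(-L t0) (-k) (L - a |k|) > 0 once L exceeds a |k| (a and |k|
   are bounded by compactness), contradicting minimality to the left of t0. *)

From HB Require Import structures.
From mathcomp Require Import all_boot all_order all_algebra.
From mathcomp Require Import all_classical all_reals all_analysis.
From mathcomp Require Import mxtens.
From mathcomp Require Import ring lra zify.
Import Order.TTheory GRing.Theory Num.Theory.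
Import numFieldNormedType.Exports.
Local Open Scope classical_set_scope.
Local Open Scope ring_scope.

Set Implicit Arguments.
Unset Strict Implicit.
Unset Printing Implicit Defensive.

Section BilinearForm.
Variable R : comNzRingType.

Lemma sum_delta n (i : 'I_n) (f : 'I_n -> R) : \sum_j (i == j)%:R * f j = f i.
Proof.
rewrite (bigD1 i) //= eqxx mul1r big1 ?addr0 // => j /negbTE.
by rewrite eq_sym => ->; rewrite mul0r.
Qed.

Definition form m (X : 'M[R]_m) (u v : 'rV[R]_m) : R := (u *m X *m v^T) 0 0.

Definition sqnorm m (v : 'rV[R]_m) : R := (v *m v^T) 0 0.

Lemma formE m (X : 'M[R]_m) u v :
  form X u v = \sum_i \sum_j u 0 i * X i j * v 0 j.
Proof.
rewrite /form mxE; under eq_bigr => j _ do rewrite mxE mulr_suml.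
rewrite exchange_big; apply: eq_bigr => i _; apply: eq_bigr => j _.
by rewrite !mxE.
Qed.

Lemma sqnormE m (v : 'rV[R]_m) : sqnorm v = \sum_i v 0 i ^+ 2.
Proof. by rewrite /sqnorm mxE; apply: eq_bigr => i _; rewrite !mxE expr2. Qed.

Lemma sqnormZ m a (v : 'rV[R]_m) : sqnorm (a *: v) = a ^+ 2 * sqnorm v.
Proof. by rewrite /sqnorm linearZ /= -scalemxAr -scalemxAl !mxE expr2 mulrA. Qed.

Lemma formDl m (X : 'M[R]_m) u1 u2 v : form X (u1 + u2) v = form X u1 v + form X u2 v.
Proof. by rewrite /form !mulmxDl mxE. Qed.

Lemma formDr m (X : 'M[R]_m) u v1 v2 : form X u (v1 + v2) = form X u v1 + form X u v2.
Proof. by rewrite /form linearD /= mulmxDr mxE. Qed.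

Lemma formZl m (X : 'M[R]_m) a u v : form X (a *: u) v = a * form X u v.
Proof. by rewrite /form -!scalemxAl mxE. Qed.

Lemma formZr m (X : 'M[R]_m) a u v : form X u (a *: v) = a * form X u v.
Proof. by rewrite /form linearZ /= -scalemxAr mxE. Qed.

Lemma formNl m (X : 'M[R]_m) u v : form X (- u) v = - form X u v.
Proof. by rewrite -scaleN1r formZl mulN1r. Qed.

Lemma formNr m (X : 'M[R]_m) u v : form X u (- v) = - form X u v.
Proof. by rewrite -scaleN1r formZr mulN1r. Qed.

Lemma formD m (X Y : 'M[R]_m) u v : form (X + Y) u v = form X u v + form Y u v.
Proof. by rewrite /form mulmxDr mulmxDl mxE. Qed.

Lemma formB m (X Y : 'M[R]_m) u v : form (X - Y) u v = form X u v - form Y u v.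
Proof. by rewrite /form mulmxBr mulmxBl !mxE. Qed.

Lemma form_scalar m (a : R) (u : 'rV[R]_m) : form a%:M u u = a * sqnorm u.
Proof. by rewrite /form mul_mx_scalar -scalemxAl mxE. Qed.

Lemma form_tr m (X : 'M[R]_m) u v : form X^T u v = form X v u.
Proof.
rewrite !formE exchange_big; apply: eq_bigr => i _; apply: eq_bigr => j _.
by rewrite mxE; ring.
Qed.

Lemma form_mulmx m (F A G : 'M[R]_m) u v :
  form (F *m A *m G) u v = form A (u *m F) (v *m G^T).
Proof. by rewrite /form trmx_mul trmxK !mulmxA. Qed.

Lemma form0l m (X : 'M[R]_m) v : form X 0 v = 0.
Proof. by rewrite /form !mul0mx mxE. Qed.

Lemma row_eq0_form m (X : 'M[R]_m) v : (forall u, form X v u = 0) -> v *m X = 0.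
Proof.
move=> h; apply/rowP => k; have := h (delta_mx 0 k).
by rewrite /form trmx_delta -colE !mxE => ->.
Qed.

End BilinearForm.

Section TensorForm.
Variable R : comNzRingType.

Lemma sum_mxtens m n (f : 'I_(m * n) -> R) :
  \sum_p f p = \sum_i \sum_j f (mxtens_index (i, j)).
Proof.
rewrite pair_big /= (reindex (@mxtens_index m n)) /=.
  by apply: eq_bigr => -[i j].
by exists (@mxtens_unindex m n) => p _; rewrite (mxtens_indexK, mxtens_unindexK).
Qed.

Lemma form_tens m n (X : 'M[R]_m) (Y : 'M[R]_n) (v : 'rV[R]_(m * n)) :
  let V := \matrix_(i, k) v 0 (mxtens_index (i, k)) in
  form (X *t Y) v v = \sum_i \sum_j X i j * form Y (row i V) (row j V).
Proof.
rewrite formE sum_mxtens; apply: eq_bigr => i _.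
under eq_bigr => k _ do rewrite sum_mxtens.
rewrite exchange_big; apply: eq_bigr => j _.
rewrite formE mulr_sumr; apply: eq_bigr => k _.
rewrite mulr_sumr; apply: eq_bigr => l _.
by rewrite tensmxE !mxE; ring.
Qed.

End TensorForm.

Section PositiveSemidefinite.
Variable R : realType.

Lemma kron_tensmx m1 n1 m2 n2 (A : 'M[R]_(m1, n1)) (B : 'M[R]_(m2, n2)) :
  kron A B = A *t B.
Proof.
have mx_atE m n (M : 'M[R]_(m, n)) (i : 'I_m) (j : 'I_n) : mx_at M i j = M i j.
  rewrite /mx_at (insubT (fun x => x < m)%N (ltn_ord i)).
  rewrite (insubT (fun x => x < n)%N (ltn_ord j)).
  by congr (M _ _); apply: val_inj.
by apply/matrixP => p q; rewrite !mxE -!(mx_atE _ _ A) -!(mx_atE _ _ B).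
Qed.

Lemma psdE m (X : 'M[R]_m) : psd X <-> forall u, 0 <= form X u u.
Proof.
split=> [h u|h b]; first by have := h u^T; rewrite trmxK.
by have := h b^T; rewrite /form trmxK.
Qed.

Lemma psd_tens1 n m (Y : 'M[R]_m) : psd Y -> psd ((1%:M : 'M[R]_n) *t Y).
Proof.
move=> /psdE hY; apply/psdE => v; rewrite form_tens.
by apply: sumr_ge0 => i _; under eq_bigr => j _ do rewrite mxE; rewrite sum_delta.
Qed.

Lemma psd_tens_mulmx_tr n m p (X : 'M[R]_n) (M : 'M[R]_(m, p)) :
  psd X -> psd (X *t (M *m M^T)).
Proof.
move=> /psdE hX; apply/psdE => v; rewrite form_tens.
set V := \matrix_(i, k) _; set W := V *m M.
suff -> : \sum_i \sum_j X i j * form (M *m M^T) (row i V) (row j V) =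
          \sum_d form X (row d W^T) (row d W^T).
  by apply: sumr_ge0 => d _; exact: hX.
symmetry; under eq_bigr => d _ do rewrite formE.
rewrite exchange_big; apply: eq_bigr => i _.
rewrite exchange_big; apply: eq_bigr => j _.
rewrite /form mulmxA -mulmxA -trmx_mul -!(row_mul _ V M) [in RHS]mxE mulr_sumr.
by apply: eq_bigr => d _; rewrite !mxE; ring.
Qed.

Lemma spd_psd m (S : 'M[R]_m) : spd S -> psd S.
Proof.
case=> _ hS b; have [->|b0] := eqVneq b 0; first by rewrite mulmx0 mxE.
exact/ltW/hS.
Qed.

Lemma spd_unitmx m (S : 'M[R]_m) : spd S -> S \in unitmx.
Proof.
case=> _ hS; rewrite unitmxE unitfE; apply/negP => /det0P [v v0 hv].
have vT0 : v^T != 0 by apply: contraNneq v0 => h; rewrite -[v]trmxK h linear0.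
by have := hS _ vT0; rewrite trmxK hv mul0mx mxE ltxx.
Qed.

Lemma psd_invmx m (S : 'M[R]_m) : spd S -> psd (invmx S).
Proof.
move=> hS; have [S_sym _] := hS; apply/psdE => u.
have -> : form (invmx S) u u = form S (u *m invmx S) (u *m invmx S).
  rewrite /form trmx_mul trmx_inv S_sym !mulmxA -[_ *m S]mulmxA.
  by rewrite mulVmx ?spd_unitmx // mulmx1.
by move: (spd_psd hS) => /psdE.
Qed.

Lemma form_Gam N (gamma : nat -> R) (z : 'rV[R]_N.-1) :
  let s := \sum_i z 0 i in
  form (Gam N gamma) z z = \sum_(i < N.-1) gamma i.+1 * z 0 i ^+ 2
    - N%:R^-1 * s * (\sum_(i < N.-1) gamma i.+1 * z 0 i - gamma N * s).
Proof.
move=> s; rewrite formE.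
transitivity
  (\sum_(i < N.-1) \sum_(j < N.-1) (i == j)%:R * (z 0 i * gamma i.+1 * z 0 j)
   - \sum_(i < N.-1) \sum_(j < N.-1)
       z 0 i * (N%:R^-1 * (gamma j.+1 - gamma N)) * z 0 j).
  rewrite -sumrB; apply: eq_bigr => i _; rewrite -sumrB; apply: eq_bigr => j _.
  by rewrite mxE; ring.
under eq_bigr => i _ do rewrite sum_delta.
congr (_ - _); first by apply: eq_bigr => i _; ring.
have -> : \sum_(i < N.-1) gamma i.+1 * z 0 i - gamma N * s
          = \sum_(j < N.-1) (gamma j.+1 - gamma N) * z 0 j.
  by rewrite /s mulr_sumr -sumrB; apply: eq_bigr => j _; ring.
rewrite -mulrA /s mulr_suml mulr_sumr; apply: eq_bigr => i _.
by rewrite !mulr_sumr; apply: eq_bigr => j _; ring.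
Qed.

Lemma psd_Gam N (gamma : nat -> R) : (2 <= N)%N ->
  (forall n, (1 <= n <= N)%N -> 0 < gamma n) ->
  (forall n, (1 <= n <= N)%N -> gamma n <= gamma N) ->
  psd (Gam N gamma).
Proof.
move=> N2 gamma_gt0 gamma_le; apply/psdE => z; rewrite form_Gam.
set n := N.-1; set gN := gamma N.
have idx (i : 'I_n) : (1 <= i.+1 <= N)%N by have := ltn_ord i; rewrite /n; lia.
set X := \sum_i _ * z 0 i ^+ 2; set s := \sum_i z 0 i.
set u := \sum_i _ * z 0 i; set G := \sum_(i < n) gamma i.+1.
have n_gt0 : (0 < n)%N by rewrite /n; lia.
have NE : N%:R = n%:R + 1 :> R by rewrite natr1 prednK //; lia.
have X_ge0 : 0 <= X.
  by apply: sumr_ge0 => i _; apply: mulr_ge0; [exact/ltW/gamma_gt0 | exact: sqr_ge0].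
have G_le : G <= n%:R * gN.
  apply: (@le_trans _ _ (\sum_(i < n) gN)); first by apply: ler_sum => i _; exact: gamma_le.
  by rewrite sumr_const card_ord mulr_natl.
have sos : 0 <= n%:R ^+ 2 * X - 4 * n%:R * s * u + 4 * s ^+ 2 * G.
  have -> : n%:R ^+ 2 * X - 4 * n%:R * s * u + 4 * s ^+ 2 * G
          = \sum_(i < n) gamma i.+1 * (n%:R * z 0 i - 2 * s) ^+ 2.
    rewrite (eq_bigr (fun i : 'I_n => n%:R ^+ 2 * (gamma i.+1 * z 0 i ^+ 2)
      - 4 * n%:R * s * (gamma i.+1 * z 0 i) + 4 * s ^+ 2 * gamma i.+1)) => [|i _].
      by rewrite big_split sumrB /= -!mulr_sumr.
    by ring.
  by apply: sumr_ge0 => i _; apply: mulr_ge0; [exact/ltW/gamma_gt0 | exact: sqr_ge0].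
have n_ge1 : 1 <= n%:R :> R by rewrite ler1n.
have key : 0 <= N%:R * X - s * u + gN * s ^+ 2 by rewrite NE; nra.
have N_gt0 : 0 < N%:R :> R by rewrite ltr0n; lia.
have -> : X - N%:R^-1 * s * (u - gN * s) = N%:R^-1 * (N%:R * X - s * u + gN * s ^+ 2).
  by field; rewrite gt_eqF.
by rewrite mulr_ge0 // invr_ge0 ltW.
Qed.

End PositiveSemidefinite.

Section Sphere.
Variable R : realType.

Lemma sqnorm_ge0 m (v : 'rV[R]_m) : 0 <= sqnorm v.
Proof. by rewrite sqnormE; apply: sumr_ge0 => i _; exact: sqr_ge0. Qed.

Lemma sqnorm_eq0 m (v : 'rV[R]_m) : (sqnorm v == 0) = (v == 0).
Proof.
apply/eqP/eqP => [|->]; last by rewrite /sqnorm mul0mx mxE.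
rewrite sqnormE => /eqP; rewrite psumr_eq0 => [/allP h|i _]; last exact: sqr_ge0.
apply/rowP => i; rewrite !mxE; apply/eqP.
by rewrite -sqrf_eq0; apply: h; rewrite mem_index_enum.
Qed.

Definition sphere m : set 'rV[R]_m := [set v | sqnorm v = 1].

Lemma sphere_coord_le1 m (v : 'rV[R]_m) i : sphere v -> `|v 0 i| <= 1.
Proof.
move=> v1; rewrite -(@expr_le1 _ 2) // real_normK ?num_real // -v1 sqnormE.
rewrite (bigD1 i) //= lerDl; apply: sumr_ge0 => j _; exact: sqr_ge0.
Qed.

Lemma continuous_sqnorm m : continuous (@sqnorm R m).
Proof.
rewrite (_ : @sqnorm R m = fun v => \sum_i v 0 i * v 0 i); last first.
  by apply/funext => v; rewrite sqnormE; under eq_bigr do rewrite expr2.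
apply: continuous_big => [|i _ v]; first exact: add_continuous.
by apply: continuousM; exact: coord_continuous.
Qed.

Lemma compact_sphere m : compact (@sphere m).
Proof.
have box : compact [set v : 'rV[R]_m | forall i, `[-1, 1]%classic (v ord0 i)].
  exact (@rV_compact R m (fun=> `[-1, 1]%classic) (fun=> @segment_compact _ (-1) 1)).
have closed_sphere : closed (@sphere m).
  apply: (@preimage_closed _ _ (@sqnorm R m) [set x | x = 1]) => [v _|].
    exact: continuous_sqnorm.
  exact: closed_eq.
apply: (subclosed_compact closed_sphere box) => v /sphere_coord_le1 v1 i.
by have := v1 i; rewrite /= in_itv /= -ler_norml.
Qed.

Lemma continuous_weighted_form m (I : set R) (S : set 'rV[R]_m)
    (w : R -> R) (F : R -> 'M[R]_m) :
  continuous w -> (forall i j, {within I, continuous (fun t => F t i j)}) ->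
  {within I `*` S, continuous (fun x => w x.1 * form (F x.1) x.2 x.2)}.
Proof.
move=> wc Fc; apply/continuous_subspace_prodP => x _.
pose f (x : subspace I * subspace S) := w x.1 * form (F x.1) x.2 x.2.
suff : continuous f by apply.
have fst_cont (g : R -> R) : {within I, continuous g} ->
    continuous (fun x : subspace I * subspace S => g x.1).
  by move=> gc y; apply: continuous_comp; [exact: cvg_fst | exact: gc].
have snd_cont i : continuous (fun x : subspace I * subspace S => x.2 0 i).
  move=> y; apply: (@continuous_comp _ _ _ snd (fun v : subspace S => v 0 i)).
    exact: cvg_snd.
  exact (@continuous_subspaceT _ _ S _ (@coord_continuous R 1 m 0 i) y.2).
rewrite /f (_ : (fun x => _) = fun x : subspace I * subspace S =>
    w x.1 * \sum_i \sum_j x.2 0 i * F x.1 i j * x.2 0 j); last first.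
  by apply/funext => y; rewrite formE.
move=> y; apply: continuousM.
  by apply: fst_cont y; exact: continuous_subspaceT.
move: y; apply: continuous_big => [|i _]; first exact: add_continuous.
apply: continuous_big => [|j _ y]; first exact: add_continuous.
apply: (continuousM (s := fun x : subspace I * subspace S => x.2 0 i * F x.1 i j)).
  apply: continuousM; first exact (snd_cont i y).
  exact (fst_cont _ (Fc i j) y).
exact (snd_cont j y).
Qed.

Lemma form_ge_sphere m (X : 'M[R]_m) k :
  (forall v, sphere v -> k <= form X v v) -> forall u, k * sqnorm u <= form X u u.
Proof.
move=> hk u; have [->|u0] := eqVneq u 0.
  by rewrite form0l /sqnorm mul0mx mxE mulr0.
have su_gt0 : 0 < sqnorm u by rewrite lt_def sqnorm_eq0 u0 sqnorm_ge0.
pose r := Num.sqrt (sqnorm u).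
have r_gt0 : 0 < r by rewrite sqrtr_gt0.
have rr : r ^+ 2 = sqnorm u by rewrite sqr_sqrtr // ltW.
have := hk (r^-1 *: u); rewrite formZl formZr.
rewrite /sphere /= sqnormZ -rr exprVn mulVf ?expf_neq0 ?gt_eqF // => /(_ erefl).
have -> : r^-1 * (r^-1 * form X u u) = form X u u / r ^+ 2.
  by field; rewrite gt_eqF.
by rewrite ler_pdivlMr // exprn_gt0.
Qed.

Lemma weighted_form_min m (w : R -> R) (F : R -> 'M[R]_m) (tau : R) (v0 : 'rV[R]_m) :
  0 <= tau -> sphere v0 -> continuous w ->
  (forall i j, {within `[0, tau], continuous (fun t => F t i j)}) ->
  exists t0 v, [/\ 0 <= t0 <= tau, sphere v & forall t u, 0 <= t <= tau -> sphere u ->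
    w t0 * form (F t0) v v <= w t * form (F t) u u].
Proof.
move=> tau_ge0 v0S wc Fc.
pose X := `[0, tau] `*` @sphere m.
have XP t v : X (t, v) <-> 0 <= t <= tau /\ sphere v by rewrite /X /= in_itv.
have X0 : X !=set0 by exists (tau, v0); apply/XP; rewrite tau_ge0 lexx.
have Xc : compact X.
  by apply: compact_setX; [exact: segment_compact | exact: compact_sphere].
have [[t0 v] /set_mem /XP [t0I vS] xmin] :=
  compact_EVT_min X0 Xc (continuous_weighted_form wc Fc).
exists t0, v; split=> // t u tI uS.
by apply: (xmin (t, u)); rewrite inE; apply/XP.
Qed.

End Sphere.

Section RiccatiComparison.
Variable R : realType.

Lemma form_psd_kernel m (B : 'M[R]_m) v :
  (forall u, 0 <= form B u u) -> form B v v = 0 ->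
  forall u, form B v u + form B u v = 0.
Proof.
move=> B_ge0 Bv u.
set b := form B v u + form B u v; set c := form B u u.
have c_ge0 : 0 <= c by exact: B_ge0.
have quad s : 0 <= s * b + s ^+ 2 * c.
  by have := B_ge0 (v + s *: u); rewrite !(formDl, formDr, formZl, formZr) Bv /b /c; lra.
have c1_gt0 : 0 < c + 1 by lra.
have := quad (- b / (c + 1)).
have -> : - b / (c + 1) * b + (- b / (c + 1)) ^+ 2 * c = - (b ^+ 2) / (c + 1) ^+ 2.
  by field; rewrite gt_eqF.
rewrite mulNr oppr_ge0 pmulr_lle0 ?invr_gt0 ?exprn_gt0 // => b2.
by apply/eqP; rewrite -sqrf_eq0 eq_le b2 sqr_ge0.
Qed.

Lemma symmetric_part_at_min m (F : 'M[R]_m) v :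
  sphere v -> (forall u, sphere u -> form F v v <= form F u u) ->
  v *m F + v *m F^T = (form F v v *+ 2) *: v.
Proof.
move=> vS vmin; set k := form F v v; set B := F - k%:M.
have B_ge0 u : 0 <= form B u u.
  by rewrite formB form_scalar subr_ge0; exact: form_ge_sphere.
have Bv : form B v v = 0 by rewrite formB form_scalar vS mulr1 subrr.
have /row_eq0_form : forall u, form (B + B^T) v u = 0.
  by move=> u; rewrite formD form_tr; exact: form_psd_kernel.
rewrite /B linearB /= tr_scalar_mx mulmxDr !mulmxBr !mul_mx_scalar.
by move/eqP; rewrite addrACA -opprD subr_eq0 => /eqP ->; rewrite -scalerDl.
Qed.

Lemma form_riccati_ge m (Q F A : 'M[R]_m) v k :
  A^T = A -> (forall u, 0 <= form A u u) -> 0 <= form Q v v ->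
  v *m F + v *m F^T = (k *+ 2) *: v ->
  - (k ^+ 2 * form A v v) <= form (Q - F *m A *m F) v v.
Proof.
move=> A_sym A_ge0 Q_ge0 vF.
have FtE : v *m F^T = (k *+ 2) *: v - v *m F by rewrite -vF addrC addKr.
rewrite formB form_mulmx FtE; set p := v *m F.
have := A_ge0 (p - k *: v).
rewrite !(formDl, formDr, formZl, formZr, formNl, formNr).
rewrite -[form A v p]form_tr A_sym.
nra.
Qed.

Lemma derive_le0_at_left_min (g : R -> R) (a x d : R) :
  a < x -> is_derive x 1 g d -> (forall t, a < t < x -> g x <= g t) -> d <= 0.
Proof.
move=> ax dg gmin.
have gx : derivable g x 1 by case: dg.
rewrite -(@derive_val _ _ _ _ _ _ _ dg) ['D_1 g x]cvg_at_leftE //.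
apply: limr_le.
  rewrite -(cvg_at_leftE (fun h : R => h^-1 *: ((g \o shift x) _ - g x))) //.
  apply: cvg_trans gx; apply: cvg_app.
  move=> A [e e_gt0 Ae]; exists e => // y ye y_lt0; apply: Ae => //.
  exact/ltr0_neq0.
near=> h; apply: mulr_le0_ge0.
  by rewrite invr_le0; apply: ltW; near: h; exists 1 => /=.
rewrite subr_ge0 [_%:A]mulr1; apply: gmin; near: h.
exists (x - a); first by rewrite /= subr_gt0.
move=> h; rewrite /= distrC subr0 => /ltr_normlP [] h1 h2 h_lt0.
apply/andP; split; lra.
Unshelve. all: by end_near. Qed.

Lemma is_derive_form m (F : R -> 'M[R]_m) (D : 'M[R]_m) (u v : 'rV[R]_m) (t : R) :
  (forall i j, is_derive t 1 (fun s => F s i j) (D i j)) ->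
  is_derive t 1 (fun s => form (F s) u v) (form D u v).
Proof.
move=> FD; rewrite (_ : (fun s => _) =
    \sum_i \sum_j (u 0 i * v 0 j) *: (fun s => F s i j)); last first.
  apply/funext => s; rewrite formE fct_sumE; apply: eq_bigr => i _.
  by rewrite fct_sumE; apply: eq_bigr => j _; rewrite scalrfctE /GRing.scale /=; ring.
rewrite formE (_ : \sum_i _ = \sum_i \sum_j (u 0 i * v 0 j) *: D i j); last first.
  by apply: eq_bigr => i _; apply: eq_bigr => j _; rewrite /GRing.scale /=; ring.
by apply: is_derive_sum => i; apply: is_derive_sum.
Qed.

Lemma riccati_no_weighted_left_min m (F Q : R -> 'M[R]_m) (A : 'M[R]_m)
    (L ts : R) (v : 'rV[R]_m) :
  A^T = A -> (forall u, 0 <= form A u u) -> 0 <= form (Q ts) v v ->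
  (forall i j, is_derive ts 1 (fun s => F s i j) ((Q ts - F ts *m A *m F ts) i j)) ->
  sphere v -> (forall u, sphere u -> form (F ts) v v <= form (F ts) u u) ->
  form (F ts) v v < 0 -> form A v v * - form (F ts) v v < L -> 0 < ts ->
  ~ (forall t, 0 < t < ts ->
       expR (- (L * ts)) * form (F ts) v v <= expR (- (L * t)) * form (F t) v v).
Proof.
move=> A_sym A_ge0 Q_ge0 Fd vS vmin k_lt0 L_gt ts_gt0 wmin.
set k := form (F ts) v v in vmin k_lt0 L_gt wmin.
have dw : is_derive ts 1 (fun s => expR (- (L * s))) (- L * expR (- (L * ts))).
  have dLs : is_derive ts 1 (fun s : R => - (L * s)) (- L).
    by have := is_deriveN (is_deriveZ L (@is_derive_id _ _ ts 1)); rewrite [_%:A]mulr1.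
  by rewrite mulrC; apply: is_derive1_comp; exact: is_derive_expR.
have := derive_le0_at_left_min ts_gt0 (is_deriveM dw (is_derive_form v v Fd)) wmin.
have := form_riccati_ge A_sym A_ge0 Q_ge0 (symmetric_part_at_min vS vmin).
rewrite -/k /GRing.scale /=; have := expR_gt0 (- (L * ts)).
set w := expR _; set D := form (Q ts - _) v v; set a := form A v v in L_gt *.
have : 0 < - k * (L - a * - k) by apply: mulr_gt0; lra.
nra.
Qed.

Lemma riccati_psd m (F Q : R -> 'M[R]_m) (A : 'M[R]_m) (T : R) :
  A^T = A -> psd A -> (forall t, 0 < t < T -> psd (Q t)) ->
  (forall i j, {within `[0, T[, continuous (fun t => F t i j)}) ->
  (forall t, 0 < t < T -> forall i j,
      is_derive t 1 (fun s => F s i j) ((Q t - F t *m A *m F t) i j)) ->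
  F 0 = 0 -> forall tau, 0 <= tau < T -> psd (F tau).
Proof.
move=> A_sym /psdE A_ge0 Q_psd Fc Fd F0 tau /andP[tau_ge0 tau_lt].
apply/psdE => u; rewrite -(mul0r (sqnorm u)); apply: form_ge_sphere => v0 v0S.
rewrite leNgt; apply/negP => Fv0_lt0.
have FcX i j : {within `[0, tau], continuous (fun t => F t i j)}.
  apply: continuous_subspaceW (Fc i j) => t /=; rewrite !in_itv /= => /andP[-> t_le] /=.
  exact: le_lt_trans tau_lt.
have A_cont i j : {within `[0, tau], continuous (fun=> A i j)}.
  by move=> t; exact: cvg_cst.
have [t1 [v1 [_ _ C_lb]]] := weighted_form_min tau_ge0 v0S (@cst_continuous R R 1) FcX.
have [t2 [v2 [_ _ a_ub]]] :=
  weighted_form_min tau_ge0 v0S (@cst_continuous R R (-1)) A_cont.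
set C := - form (F t1) v1 v1; set a := form A v2 v2; set L := a * C + 1.
have w_cont : continuous (fun t => expR (- (L * t))).
  move=> t; apply: continuous_comp; last exact: continuous_expR.
  by apply: continuousN; apply: continuousM; [exact: cst_continuous | exact: cvg_id].
have [ts [vs [/andP[ts_ge0 ts_le] vsS wmin]]] := weighted_form_min tau_ge0 v0S w_cont FcX.
set k := form (F ts) vs vs in wmin.
have k_lt0 : k < 0.
  have := wmin tau v0; rewrite tau_ge0 lexx => /(_ isT v0S) wk.
  rewrite -(pmulr_rlt0 _ (expR_gt0 (- (L * ts)))); apply: le_lt_trans wk _.
  by rewrite pmulr_rlt0 ?expR_gt0.
have ts_gt0 : 0 < ts.
  rewrite lt_def ts_ge0 andbT; apply: contraTneq k_lt0 => ts0.
  by rewrite /k ts0 F0 /form mulmx0 mul0mx mxE ltxx.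
have vmin v : sphere v -> k <= form (F ts) v v.
  by move=> vS; have := wmin ts v; rewrite ts_ge0 ts_le ler_pM2l ?expR_gt0 //; apply.
have L_gt : form A vs vs * - k < L.
  have tsI : 0 <= ts <= tau by rewrite ts_ge0 ts_le.
  have := C_lb _ _ tsI vsS; have := a_ub _ _ tsI vsS; rewrite !mul1r !mulN1r lerN2 -/k.
  move=> Aa Ck; have Avs := A_ge0 vs; rewrite /L /C /a.
  have : 0 <= (form A v2 v2 - form A vs vs) * - k by apply: mulr_ge0; lra.
  have : 0 <= form A v2 v2 * (k - form (F t1) v1 v1) by apply: mulr_ge0; lra.
  nra.
have tsT : 0 < ts < T by rewrite ts_gt0 (le_lt_trans ts_le tau_lt).
apply: (riccati_no_weighted_left_min A_sym A_ge0 _ (Fd ts tsT) vsS vmin k_lt0 L_gt ts_gt0).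
  by have /psdE := Q_psd ts tsT.
move=> t /andP[t_gt0 t_lt]; apply: wmin vsS.
by rewrite (ltW t_gt0) (le_trans (ltW t_lt) ts_le).
Qed.

End RiccatiComparison.

Theorem corollary7p7 (R : realType) (N K D : nat) (gamma : nat -> R)
  (Lam : 'M[R]_K) (alpha : 'M[R]_(K, D)) (xi : 'M[R]_(N.-1 * D, D))
  (T : R) (F : R -> 'M[R]_(N.-1 * K)) (H : R -> 'M[R]_(N.-1 * K, D)) :
  (2 <= N)%N -> (K <= D)%N ->
  (forall n, (1 <= n <= N)%N -> 0 < gamma n) ->
  (forall n, (1 <= n <= N)%N -> gamma n <= gamma N) ->
  spd Lam ->
  0 < T ->
  (forall i j, {within `[0, T[, continuous (fun t => F t i j)}) ->
  (forall i j, {within `[0, T[, continuous (fun t => H t i j)}) ->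
  (forall t, 0 < t < T -> forall i j,
      is_derive t 1 (fun s => F s i j) (ricF N gamma Lam alpha (F t) (H t) i j)) ->
  (forall t, 0 < t < T -> forall i j,
      is_derive t 1 (fun s => H s i j) (ricH N gamma Lam alpha xi (F t) (H t) i j)) ->
  F 0 = 0 -> H 0 = 0 ->
  forall tau, 0 <= tau < T -> psd (F tau).
Proof.
move=> N_ge2 _ gamma_gt0 gamma_le Lam_spd _ Fc _ Fd _ F0 _.
pose M t := Mterm N gamma alpha (H t).
apply: (@riccati_psd _ _ F (fun t => kron (Gam N gamma) (M t *m (M t)^T))
                     (kron 1%:M (invmx Lam)) T) => //.
- by rewrite kron_tensmx trmx_tens trmx1 trmx_inv Lam_spd.1.
- by rewrite kron_tensmx; apply/psd_tens1/psd_invmx.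
- by move=> t _; rewrite kron_tensmx; apply/psd_tens_mulmx_tr/psd_Gam.
Qed.
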